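(* Let $F$ be a probability distribution on the non-negative integers. In the Coin Toss (CT) model with degree distribution $F$, the total length $T$ of all edges at the origin satisfies $\mathbb{E}[T]<\infty$ if and only if $F$ has bounded support.
   Context: CT model: independently for each $i\in\mathbb{Z}$ let $D_i\sim F$, and attach $D_i$ stubs $s_{i,1},\dots,s_{i,D_i}$ to vertex $i$. For $j\ge1$ let $\Gamma_j=\{i\in\mathbb{Z}:D_i\ge j\}$; the stubs $s_{i,j}$, $i\in\Gamma_j$, form level $j$. For each level $j$ separately (with independent fair coin tosses, independent of the degrees) the level-$j$ stubs are given directions so that along $\Gamma_j$ (in increasing order) the directions alternate right, left, right, left, \dots, the direction of the stub at the first vertex $i\ge 0$ of $\Gamma_j$ being right or left according to a fair coin. A level-$j$ stub at $i$ pointing right (left) is joined to the level-$j$ stub at the $(2j-1)$-th vertex of $\Gamma_j$ to the right (left) of $i$, producing an edge. The length of an edge $\{i,k\}$ is $|i-k|$, and $T$ is the total length of all edges at vertex $0$. *)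

From HB Require Import structures.
From mathcomp Require Import all_boot all_order all_algebra.
From mathcomp Require Import all_classical all_reals all_analysis.

Set Implicit Arguments.
Unset Strict Implicit.
Unset Printing Implicit Defensive.

Import Order.TTheory GRing.Theory Num.Theory.
Local Open Scope classical_set_scope.
Local Open Scope ring_scope.

(* (c j = true means: the level-j stub at the first vertex i >= 0 of    *)
(*  Gamma_j points right).                                              *)

(* number of vertices of Gamma_j = {i | D i >= j} in [a, a + n) *)
Definition gamma_cnt (D : int -> nat) (j : nat) (a : int) (n : nat) : nat :=
  (\sum_(0 <= k < n) (j <= D (a + k%:Z)%R))%N.

Definition right_pred (D : int -> nat) (j : nat) (i : int) : pred nat :=
  fun d => gamma_cnt D j (i + 1) d == (2 * j).-1.

Definition left_pred (D : int -> nat) (j : nat) (i : int) : pred nat :=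
  fun d => gamma_cnt D j (i - d%:Z) d == (2 * j).-1.

Definition dist_right (D : int -> nat) (j : nat) (i : int) : option nat :=
  match pselect (exists d, right_pred D j i d) with
  | left h => Some (ex_minn h)
  | right _ => None
  end.

Definition dist_left (D : int -> nat) (j : nat) (i : int) : option nat :=
  match pselect (exists d, left_pred D j i d) with
  | left h => Some (ex_minn h)
  | right _ => None
  end.

Definition gamma_rank (D : int -> nat) (j : nat) (i : int) : nat :=
  if 0 <= i then gamma_cnt D j 0 `|i|%N else gamma_cnt D j i `|i|%N.

(* direction of the level-j stub at i (i in Gamma_j): true = right.
   Directions alternate along Gamma_j, and the first vertex i >= 0 of
   Gamma_j points right iff c j. *)
Definition stub_right (D : int -> nat) (c : nat -> bool) (j : nat) (i : int)
  : bool := c j == ~~ odd (gamma_rank D j i).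

Definition stub_len (D : int -> nat) (c : nat -> bool) (j : nat) (i : int)
  : option nat :=
  if stub_right D c j i then dist_right D j i else dist_left D j i.

(* total length of all edges at vertex 0: one edge per stub s_{0,j},
   j = 1..D_0 (a non-existing partner, a null event, contributes 0) *)
Definition CT_T (R : realType) (D : int -> nat) (c : nat -> bool) : R :=
  ((\sum_(1 <= j < (D 0).+1) odflt 0%N (stub_len D c j 0))%N)%:R.

Definition CT_family (d : measure_display) (Omega : measurableType d)
  (D : int -> Omega -> nat) (c : nat -> Omega -> bool)
  : int + nat -> Omega -> nat :=
  fun k => match k with inl i => D i | inr j => fun w => nat_of_bool (c j w) end.

Definition mutually_independent (R : realType) (d : measure_display)
  (Omega : measurableType d) (P : probability Omega R) (I : eqType)
  (X : I -> Omega -> nat) : Prop :=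
  forall (J : seq I), uniq J -> forall B : I -> set nat,
    P (\bigcap_(k in [set k | k \in J]) (X k @^-1` B k))
    = (\prod_(k <- J) P (X k @^-1` B k))%E.

Definition CT_model (R : realType) (d : measure_display)
  (Omega : measurableType d) (P : probability Omega R) (F : nat -> R)
  (D : int -> Omega -> nat) (c : nat -> Omega -> bool) : Prop :=
  [/\ (forall i n, measurable [set w | D i w = n]),
      (forall j, measurable [set w | c j w]),
      (forall i n, P [set w | D i w = n] = (F n)%:E),
      (forall j, (0 < j)%N -> P [set w | c j w] = (2^-1)%:E) &
      mutually_independent P (CT_family D c)].

Definition bounded_support (R : realType) (F : nat -> R) : Prop :=
  exists K : nat, forall n, (K < n)%N -> F n = 0.

From HB Require Import structures.
From mathcomp Require Import all_boot all_order all_algebra.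
From mathcomp Require Import all_classical all_reals all_analysis.
From mathcomp Require Import measurable_realfun zify ring lra.
Set Implicit Arguments.
Unset Strict Implicit.

Import Order.TTheory GRing.Theory Num.Theory.
Local Open Scope classical_set_scope.
Local Open Scope ring_scope.

(* Only the degrees matter: the coins merely choose between the partner on
   the right and the one on the left.
   If D <= M almost surely, the level-j stub at 0 (j <= M) is longer than n
   only if fewer than 2M-1 of the n sites on one side of 0 have degree >= M.
   Cutting these n sites into 2M-1 blocks, some block then contains no such
   site, which has probability (1 - P(D >= M))^(n/(2M-1)); summing this
   geometric tail over n bounds E[T].
   If F has unbounded support, p_j = P(D >= j) is positive and tends to 0.
   When p_j <= 1/8, put L_j = floor(1/(4 p_j)): with probability about
   p_j (1 - p_j)^(2 L_j) >= p_j / 4 the origin has degree >= j while the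
   L_j sites on either side have degree < j, so that the level-j stub at 0
   is longer than L_j.  Every such level contributes L_j p_j / 4 >= 1/32 to
   E[T], hence E[T] is infinite. *)

Lemma leq_sum_prefix (h : nat -> nat) x y : (x <= y)%N ->
  (\sum_(0 <= k < x) h k <= \sum_(0 <= k < y) h k)%N.
Proof. by move=> xy; rewrite (@big_cat_nat _ _ _ x 0 y) ?leq_addr. Qed.

Lemma ler_sum_prefix (R : numDomainType) (f : nat -> R) a e b :
  (forall n, 0 <= f n) -> (a <= e)%N -> (e <= b)%N ->
  \sum_(a <= n < e) f n <= \sum_(a <= n < b) f n.
Proof.
by move=> f0 ae eb; rewrite (@big_cat_nat _ _ _ e a b) //= lerDl sumr_ge0.
Qed.

Lemma nat_ivt (g : nat -> nat) m e : g 0%N = 0%N ->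
  (forall n, g n.+1 <= (g n).+1)%N -> (m <= g e)%N ->
  exists2 x, (x <= e)%N & g x = m.
Proof.
move=> g0 gS; elim: e => [|e IH] me.
  by exists 0%N => //; apply/eqP; rewrite eqn_leq me g0.
have [/IH [x xe gx]|gem] := leqP m (g e); first by exists x => //; exact: leqW.
exists e.+1 => //; apply/eqP; rewrite eqn_leq me andbT.
exact: leq_trans (gS e) _.
Qed.

Lemma exists_empty_block (h : nat -> bool) m d : (0 < m)%N ->
  (\sum_(0 <= k < d) h k < m)%N ->
  exists2 i, (i < m)%N & all (fun t => ~~ h (i * (d %/ m) + t)%N) (iota 0 (d %/ m)).
Proof.
move=> m0 few; set b := (d %/ m)%N.
have [//|noblock] :=
  pselect (exists2 i, (i < m)%N & all (fun t => ~~ h (i * b + t)%N) (iota 0 b)).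
exfalso; move: few; apply/negP.
have hit i : (i < m)%N -> (0 < \sum_(i * b <= k < i * b + b) h k)%N.
  move=> im; have /hasP [t] : has (fun t => h (i * b + t)%N) (iota 0 b).
    by apply/negPn/negP => hall; apply: noblock; exists i; rewrite // all_predC.
  rewrite mem_iota add0n => tb ht.
  rewrite (bigD1_seq (i * b + t)) /= ?ht ?iota_uniq //.
  by rewrite mem_index_iota leq_addr ltn_add2l.
have cover n : (n <= m)%N -> (n <= \sum_(0 <= k < n * b) h k)%N.
  elim: n => [|n IH] nm //; rewrite mulSn addnC (@big_cat_nat _ _ _ (n * b) 0) ?leq_addr //.
  by rewrite -addn1 leq_add ?hit // IH // ltnW.
rewrite ltnNge negbK; apply: leq_trans (cover m (leqnn m)) _.
by apply: leq_sum_prefix; rewrite mulnC leq_divM.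
Qed.

Lemma leq_bool (a b : bool) : (a -> b) -> (a <= b)%N.
Proof. by case: a => // /(_ isT) ->. Qed.

Section GammaCount.
Variable Dz : int -> nat.

Lemma gamma_cntS j a n :
  gamma_cnt Dz j a n.+1 = (gamma_cnt Dz j a n + (j <= Dz (a + n%:Z)))%N.
Proof. by rewrite /gamma_cnt big_nat_recr. Qed.

Lemma gamma_cnt0 j a : gamma_cnt Dz j a 0 = 0%N.
Proof. by rewrite /gamma_cnt big_geq. Qed.

Lemma leq_gamma_cnt j a x y : (x <= y)%N ->
  (gamma_cnt Dz j a x <= gamma_cnt Dz j a y)%N.
Proof. exact: leq_sum_prefix. Qed.

Lemma gamma_cnt_left j i n :
  gamma_cnt Dz j (i - n%:Z) n = (\sum_(0 <= k < n) (j <= Dz (i - k.+1%:Z)))%N.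
Proof.
rewrite /gamma_cnt big_nat_rev; apply: eq_big_nat => k /andP[_ kn].
by rewrite add0n; congr (_ <= Dz _)%N; lia.
Qed.

Lemma dist_right_le j i e : ((2 * j).-1 <= gamma_cnt Dz j (i + 1) e)%N ->
  exists2 x, dist_right Dz j i = Some x & (x <= e)%N.
Proof.
move=> cnt_e.
have step n : (gamma_cnt Dz j (i + 1) n.+1 <= (gamma_cnt Dz j (i + 1) n).+1)%N.
  by rewrite gamma_cntS; case: (j <= _)%N; rewrite ?addn1 ?addn0.
have [y ye cnt_y] := nat_ivt (gamma_cnt0 j (i + 1)) step cnt_e.
rewrite /dist_right; case: pselect => [h|[]]; last by exists y; apply/eqP.
exists (ex_minn h) => //; case: ex_minnP => x _ xmin.
by apply: leq_trans ye; apply: xmin; apply/eqP.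
Qed.

Lemma dist_left_le j i e : ((2 * j).-1 <= gamma_cnt Dz j (i - e%:Z) e)%N ->
  exists2 x, dist_left Dz j i = Some x & (x <= e)%N.
Proof.
move=> cnt_e.
have step n : (gamma_cnt Dz j (i - n.+1%:Z) n.+1 <= (gamma_cnt Dz j (i - n%:Z) n).+1)%N.
  by rewrite !gamma_cnt_left big_nat_recr //=; case: (j <= _)%N; rewrite ?addn1 ?addn0.
have [y ye cnt_y] :=
  @nat_ivt (fun n => gamma_cnt Dz j (i - n%:Z) n) _ _ (gamma_cnt0 j _) step cnt_e.
rewrite /dist_left; case: pselect => [h|[]]; last by exists y; apply/eqP.
exists (ex_minn h) => //; case: ex_minnP => x _ xmin.
by apply: leq_trans ye; apply: xmin; apply/eqP.
Qed.

Lemma gamma_cnt_dist_right j i x : dist_right Dz j i = Some x ->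
  gamma_cnt Dz j (i + 1) x = (2 * j).-1.
Proof.
by rewrite /dist_right; case: pselect => [h|//] [<-]; case: ex_minnP => y /eqP.
Qed.

Lemma gamma_cnt_dist_left j i x : dist_left Dz j i = Some x ->
  gamma_cnt Dz j (i - x%:Z) x = (2 * j).-1.
Proof.
by rewrite /dist_left; case: pselect => [h|//] [<-]; case: ex_minnP => y /eqP.
Qed.

End GammaCount.

Definition blockR (i b : nat) : seq int := [seq 1 + (i * b + t)%N%:Z | t <- iota 0 b].
Definition blockL (i b : nat) : seq int := [seq - (i * b + t).+1%:Z | t <- iota 0 b].

Definition nblocks (M : nat) := (2 * M).-1.

Definition side_block (M b k : nat) : seq int :=
  if (k < nblocks M)%N then blockR k b else blockL (k - nblocks M) b.

Lemma blockR_uniq i b : uniq (blockR i b).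
Proof. by rewrite map_inj_uniq ?iota_uniq // => x y; lia. Qed.

Lemma blockL_uniq i b : uniq (blockL i b).
Proof. by rewrite map_inj_uniq ?iota_uniq // => x y; lia. Qed.

Lemma side_block_uniq M b k : uniq (side_block M b k).
Proof. by rewrite /side_block; case: ifP => _; rewrite ?blockR_uniq ?blockL_uniq. Qed.

Lemma size_side_block M b k : size (side_block M b k) = b.
Proof. by rewrite /side_block; case: ifP => _; rewrite size_map size_iota. Qed.

Section RealInequalities.
Variable R : realFieldType.

Lemma bernoulli_ineq (x : R) n : -1 <= x -> 1 + n%:R * x <= (1 + x) ^+ n.
Proof.
move=> x1; elim: n => [|n IH]; first by rewrite mul0r addr0 expr0.
rewrite exprSr; apply: le_trans (_ : (1 + n%:R * x) * (1 + x) <= _); last first.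
  by apply: ler_wpM2r => //; lra.
have : 0 <= n%:R * x * x by rewrite -mulrA mulr_ge0 // -expr2 sqr_ge0.
rewrite -natr1; nra.
Qed.

Lemma geometric_sum_le (q : R) N : 0 <= q -> q < 1 ->
  \sum_(0 <= b < N) q ^+ b <= (1 - q)^-1.
Proof.
move=> q0 q1; have q1' : 0 < 1 - q by lra.
elim: N => [|N IH]; first by rewrite big_geq // invr_ge0 ltW.
rewrite big_nat_recl // expr0; under eq_bigr do rewrite exprS.
rewrite -mulr_sumr; apply: le_trans (_ : 1 + q * (1 - q)^-1 <= _).
  by rewrite lerD2l ler_wpM2l.
by rewrite -[X in X + _](divff (lt0r_neq0 q1')) -mulrDl; lra.
Qed.

Lemma geometric_sum_divn_le (q : R) N m : 0 <= q -> q < 1 -> (0 < m)%N ->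
  \sum_(0 <= n < N) q ^+ (n %/ m) <= m%:R * (1 - q)^-1.
Proof.
move=> q0 q1 m0.
have blocks K : \sum_(0 <= n < K * m) q ^+ (n %/ m) = m%:R * \sum_(0 <= b < K) q ^+ b.
  elim: K => [|K IH]; first by rewrite !big_geq // mulr0.
  rewrite mulSn addnC (@big_cat_nat _ _ _ (K * m) 0) ?leq_addr //= IH big_nat_recr //=.
  rewrite mulrDr; congr (_ + _).
  rewrite -{1}[(K * m)%N]add0n big_addn addnC addnK.
  rewrite (@eq_big_nat _ _ _ 0 m _ (fun _ => q ^+ K)) ?sumr_const_nat ?subn0 ?mulr_natl //.
  by move=> i /andP[_ im]; rewrite addnC divnMDl // divn_small // addn0.
apply: le_trans (_ : \sum_(0 <= n < N * m) q ^+ (n %/ m) <= _).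
  by apply: ler_sum_prefix => // [n|]; rewrite ?exprn_ge0 ?leq_pmulr.
by rewrite blocks ler_wpM2l // geometric_sum_le.
Qed.

Lemma one_sub_pow_ge (p : R) L : 0 <= p <= 1 -> L%:R * p <= 4^-1 ->
  9 / 16 <= (1 - p) ^+ (L + L).
Proof.
move=> /andP[p0 p1] Lp; rewrite exprD.
have y34 : 3 / 4 <= (1 - p) ^+ L.
  have bern : 1 - L%:R * p <= (1 - p) ^+ L.
    by have := @bernoulli_ineq (- p) L; rewrite mulrN; apply; lra.
  lra.
nra.
Qed.

Lemma one_sub_pow_small (p m : R) b : 0 < p <= 1 -> 8 * m < b%:R * p ^+ 2 ->
  8 * m * (1 - p) ^+ b <= p.
Proof.
move=> /andP[p0 p1] bp.
have z0 : 0 <= (1 - p) ^+ b by rewrite exprn_ge0 // subr_ge0.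
have zbp : (1 - p) ^+ b * (1 + b%:R * p) <= 1.
  apply: le_trans (_ : (1 - p) ^+ b * (1 + p) ^+ b <= 1).
    by apply: ler_wpM2l => //; apply: bernoulli_ineq; lra.
  by rewrite -exprMn exprn_ile1 //; nra.
have : b%:R * p ^+ 2 * (1 - p) ^+ b <= p by rewrite expr2; nra.
by apply: le_trans; apply: ler_wpM2r => //; apply: ltW.
Qed.

End RealInequalities.

Section IntegralFacts.
Context {d : measure_display} {T : measurableType d} {R : realType}.
Variable mu : {measure set T -> \bar R}.

(* Unlike [ge0_le_integral], no measurability is required: [CT_T] is never
   shown to be measurable. *)
Lemma ge0_le_integralT (f g : T -> \bar R) : (forall x, 0 <= f x)%E ->
  (forall x, f x <= g x)%E -> (\int[mu]_x f x <= \int[mu]_x g x)%E.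
Proof.
move=> f0 fg; rewrite !ge0_integralTE // => [|x]; last exact: le_trans (f0 x) (fg x).
by apply: ereal_sup_le => _ [h hf <-]; exists h => // x; exact: le_trans (hf x) (fg x).
Qed.

Lemma measurable_fun_scale_indic (A : set T) (k : R) : measurable A ->
  measurable_fun setT (fun x => (k * \1_A x)%:E : \bar R).
Proof.
move=> mA; apply/measurable_EFinP.
by apply: (@measurable_funM _ _ _ _ (cst k)) => //; exact: measurable_indic.
Qed.

Lemma integral_scale_indic (A : set T) (k : R) : measurable A -> 0 <= k ->
  (\int[mu]_x (k * \1_A x)%:E = k%:E * mu A)%E.
Proof.
move=> mA k0; under eq_integral do rewrite EFinM.
rewrite ge0_integralZl_EFin //= ?integral_indic ?setIT //.
by apply/measurable_EFinP; exact: measurable_indic.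
Qed.

End IntegralFacts.

Section CoinTossModel.
Variables (R : realType) (d : measure_display) (Omega : measurableType d).
Variables (P : probability Omega R) (F : nat -> R).
Variables (D : int -> Omega -> nat) (c : nat -> Omega -> bool).
Hypothesis CT : CT_model P F D c.

Lemma measurable_deg_eq k n : measurable [set w | D k w = n].
Proof. by case: CT. Qed.

Lemma deg_pred_bigcup k (s : pred nat) :
  [set w | s (D k w)] = \bigcup_(n in [set n | s n]) [set w | D k w = n].
Proof.
by apply/seteqP; split => w /= => [sD|[n /= sn ->]] //; exists (D k w).
Qed.

Lemma measurable_deg_pred k (s : pred nat) : measurable [set w | s (D k w)].
Proof.
by rewrite deg_pred_bigcup; apply: bigcup_measurable => n _; exact: measurable_deg_eq.
Qed.

Lemma P_deg_pred k (s : pred nat) :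
  P [set w | s (D k w)] = (\sum_(n <oo | n \in [set n | s n]) (F n)%:E)%E.
Proof.
have [_ _ lawD _ _] := CT.
rewrite deg_pred_bigcup measure_bigcup => [|n _|]; last 2 first.
- exact: measurable_deg_eq.
- by move=> i j _ _ [w [/= <- <-]].
by apply: eq_eseriesr => n _; exact: lawD.
Qed.

Definition deg_law (s : pred nat) : R := fine (P [set w | s (D 0 w)]).

Lemma P_deg_predE k (s : pred nat) : P [set w | s (D k w)] = (deg_law s)%:E.
Proof.
rewrite /deg_law fineK; first by rewrite !P_deg_pred.
by apply: fin_num_measure; exact: measurable_deg_pred.
Qed.

Lemma deg_law_ge0 (s : pred nat) : 0 <= deg_law s.
Proof. by rewrite fine_ge0 // measure_ge0. Qed.

Lemma deg_law_predC (s : pred nat) : deg_law (predC s) = 1 - deg_law s.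
Proof.
apply/EFin_inj; rewrite -(P_deg_predE 0) EFinB -(P_deg_predE 0).
rewrite -probability_setC; last exact: measurable_deg_pred.
congr (P _).
by apply/seteqP; split => w /=; case: (s _).
Qed.

Lemma deg_law_le1 (s : pred nat) : deg_law s <= 1.
Proof. by have := deg_law_ge0 (predC s); rewrite deg_law_predC subr_ge0. Qed.

Lemma le_deg_law (s1 s2 : pred nat) : (forall n, s1 n -> s2 n) -> deg_law s1 <= deg_law s2.
Proof.
move=> s12; rewrite -lee_fin -!(P_deg_predE 0).
by apply: le_measure; rewrite ?inE; try exact: measurable_deg_pred; move=> w /= /s12.
Qed.

Lemma deg_law_pred1 n : deg_law (pred1 n) = F n.
Proof.
have [_ _ lawD _ _] := CT; apply/EFin_inj; rewrite -(P_deg_predE 0) -(lawD 0).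
by congr (P _); apply/seteqP; split => w /= /eqP.
Qed.

Lemma deg_law_ltn n : deg_law (fun x => (x < n)%N) = \sum_(k < n) F k.
Proof.
elim: n => [|n IH].
  rewrite big_ord0; apply/EFin_inj.
  rewrite -(P_deg_predE 0) (P_deg_pred 0 (fun x => (x < 0)%N)).
  by rewrite eseries0 // => i _ /set_mem.
apply/EFin_inj; rewrite big_ord_recr /= EFinD -IH -deg_law_pred1 -!(P_deg_predE 0).
rewrite -measureU; last 3 first.
- exact: (measurable_deg_pred 0 (fun x => (x < n)%N)).
- exact: measurable_deg_pred.
- by apply/seteqP; split => w //= [+ /eqP nD]; rewrite nD ltnn.
congr (P _); apply/seteqP; split => w /=.
  by rewrite ltnS leq_eqVlt => /orP[/eqP ->|]; [right|left].
by case=> [/ltnW|/eqP ->].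
Qed.

Lemma deg_law_geq n : deg_law (leq n) = 1 - \sum_(k < n) F k.
Proof.
rewrite -deg_law_ltn -deg_law_predC; congr deg_law.
by apply/funext => x /=; rewrite ltnNge negbK.
Qed.

Lemma measurable_all_deg (J : seq int) (s : int -> pred nat) :
  measurable [set w | all (fun k => s k (D k w)) J].
Proof.
elim: J => [|k J IH] /=.
  by rewrite (_ : [set w | true] = setT) //; apply/seteqP.
rewrite (_ : [set w | _ && _] = [set w | s k (D k w)] `&` [set w | all (fun k => s k (D k w)) J]).
  by apply: measurableI => //; exact: measurable_deg_pred.
by apply/seteqP; split => w /= /andP.
Qed.

Lemma P_all_deg (J : seq int) (s : int -> pred nat) : uniq J ->
  P [set w | all (fun k => s k (D k w)) J] = (\prod_(k <- J) P [set w | s k (D k w)])%E.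
Proof.
move=> uJ; have [_ _ _ _ indep] := CT.
pose B (x : int + nat) : set nat := if x is inl i then [set n | s i n] else setT.
have uJ' : uniq (map inl J : seq (int + nat)) by rewrite map_inj_uniq // => x y [].
have := indep _ uJ' B; rewrite big_map /= => <-; congr (P _); apply/seteqP; split => w /=.
  by move/allP => H [i|j] /mapP [k kJ] // [->]; exact: H.
by move=> H; apply/allP => k kJ; apply: (H (inl k)); exact: map_f.
Qed.

Definition gap (s : pred nat) (J : seq int) := [set w | all (fun k => ~~ s (D k w)) J].

Lemma measurable_gap s J : measurable (gap s J).
Proof. exact: (measurable_all_deg J (fun _ => predC s)). Qed.

Lemma prod_P_deg_pred (J : seq int) (s : pred nat) :
  (\prod_(k <- J) P [set w | s (D k w)])%E = (deg_law s ^+ size J)%:E.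
Proof.
elim: J => [|k J IH]; first by rewrite big_nil.
by rewrite big_cons IH P_deg_predE -EFinM exprS.
Qed.

Lemma P_gap s J : uniq J -> P (gap s J) = ((1 - deg_law s) ^+ size J)%:E.
Proof.
move=> uJ; rewrite /gap (P_all_deg (fun _ => predC s) uJ) -deg_law_predC.
exact: prod_P_deg_pred.
Qed.

Definition gap_event M b k := gap (leq M) (side_block M b k).

Lemma measurable_gap_event M b k : measurable (gap_event M b k).
Proof. exact: measurable_gap. Qed.

Lemma P_gap_event M b k : P (gap_event M b k) = ((1 - deg_law (leq M)) ^+ b)%:E.
Proof. by rewrite P_gap ?side_block_uniq // size_side_block. Qed.

Lemma exists_gapR w (s : pred nat) m n : (0 < m)%N ->
  (\sum_(0 <= k < n) s (D (1 + k%:Z) w) < m)%N ->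
  exists2 i, (i < m)%N & gap s (blockR i (n %/ m)) w.
Proof.
move=> m0 few; have [i im hi] := @exists_empty_block (fun k => s (D (1 + k%:Z) w)) m n m0 few.
by exists i => //; rewrite /gap /blockR /= all_map.
Qed.

Lemma exists_gapL w (s : pred nat) m n : (0 < m)%N ->
  (\sum_(0 <= k < n) s (D (- k.+1%:Z) w) < m)%N ->
  exists2 i, (i < m)%N & gap s (blockL i (n %/ m)) w.
Proof.
move=> m0 few; have [i im hi] := @exists_empty_block (fun k => s (D (- k.+1%:Z) w)) m n m0 few.
by exists i => //; rewrite /gap /blockL /= all_map.
Qed.

(* Sites of degree >= M lie in Gamma_j, and 2M - 1 >= 2j - 1 of them within
   distance n of 0 on the side of the partner would bring it within distance n. *)
Lemma stub_len_gt_gap w (cc : nat -> bool) M j n : (0 < j <= M)%N ->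
  (n < odflt 0%N (stub_len (fun k => D k w) cc j 0))%N ->
  exists2 k, (k < 2 * nblocks M)%N & gap_event M (n %/ nblocks M) k w.
Proof.
move=> /andP[j0 jM]; have m0 : (0 < nblocks M)%N by rewrite /nblocks; lia.
rewrite /stub_len; case: ifP => _ hn.
  have [i im gap_i] : exists2 i, (i < nblocks M)%N & gap (leq M) (blockR i (n %/ nblocks M)) w.
    apply: exists_gapR => //; rewrite ltnNge; apply/negP => many.
    have [x dx xn] : exists2 x, dist_right (fun k => D k w) j 0 = Some x & (x <= n)%N.
      apply: dist_right_le; rewrite add0r.
      apply: leq_trans _ (leq_trans many _); first by rewrite /nblocks; lia.
      by apply: leq_sum => k _; apply: leq_bool; exact: leq_trans jM.
    by move: hn; rewrite dx /=; lia.
  by exists i; [lia | rewrite /gap_event /side_block im].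
have [i im gap_i] : exists2 i, (i < nblocks M)%N & gap (leq M) (blockL i (n %/ nblocks M)) w.
  apply: exists_gapL => //; rewrite ltnNge; apply/negP => many.
  have [x dx xn] : exists2 x, dist_left (fun k => D k w) j 0 = Some x & (x <= n)%N.
    apply: dist_left_le; rewrite gamma_cnt_left.
    apply: leq_trans _ (leq_trans many _); first by rewrite /nblocks; lia.
    by apply: leq_sum => k _; rewrite sub0r; apply: leq_bool; exact: leq_trans jM.
  by move: hn; rewrite dx /=; lia.
exists (nblocks M + i); first lia.
by rewrite /gap_event /side_block ltnNge leq_addr /= addKn.
Qed.

Definition gap_count M n w : R :=
  \sum_(k < 2 * nblocks M) \1_(gap_event M (n %/ nblocks M) k) w.

(* The indicator of the null event D 0 > M makes the bound hold everywhere. *)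
Definition dominator M n w : R :=
  M%:R * gap_count M n w + \1_[set w | (M < D 0 w)%N] w.

Lemma gap_count_ge0 M n w : 0 <= gap_count M n w.
Proof. by apply: sumr_ge0 => k _; rewrite indicE. Qed.

Lemma dominator_ge0 M n w : 0 <= dominator M n w.
Proof. by rewrite addr_ge0 ?indicE // mulr_ge0 ?gap_count_ge0. Qed.

Lemma stub_len_le_gap_count w (cc : nat -> bool) M j N : (0 < j <= M)%N ->
  (odflt 0%N (stub_len (fun k => D k w) cc j 0) <= N)%N ->
  (odflt 0%N (stub_len (fun k => D k w) cc j 0))%:R <= \sum_(0 <= n < N) gap_count M n w.
Proof.
move=> jM lenN; set len := odflt _ _ in lenN *.
apply: le_trans (_ : \sum_(0 <= n < len) (1 : R) <= _).
  by rewrite sumr_const_nat subn0.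
apply: le_trans _ (ler_sum_prefix (gap_count_ge0 M ^~ w) (leq0n _) lenN).
apply: ler_sum_nat => n /andP[_ n_len].
have [k k2m gap_k] := stub_len_gt_gap jM n_len.
rewrite /gap_count (bigD1 (Ordinal k2m)) //= indicE mem_set // lerDl.
by apply: sumr_ge0 => i _; rewrite indicE.
Qed.

Lemma CT_T_le_dominator M w : exists N,
  CT_T R (fun i => D i w) (fun j => c j w) <= \sum_(0 <= n < N) dominator M n w.
Proof.
rewrite /CT_T /=; set Tw := (\sum_(1 <= j < _) _)%N; exists Tw.
have [DM|MD] := leqP (D 0 w) M; last first.
  apply: le_trans (_ : \sum_(0 <= n < Tw) (1 : R) <= _).
    by rewrite sumr_const_nat subn0.
  apply: ler_sum_nat => n _.
  by rewrite /dominator indicE mem_set // lerDr mulr_ge0 ?gap_count_ge0.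
have stubj j : (1 <= j < (D 0 w).+1)%N ->
    (odflt 0%N (stub_len (fun k => D k w) (fun j => c j w) j 0))%:R
    <= \sum_(0 <= n < Tw) gap_count M n w.
  move=> /andP[j0 jD]; apply: stub_len_le_gap_count; first lia.
  by rewrite /Tw (bigD1_seq j) ?mem_index_iota ?iota_uniq ?j0 //= leq_addr.
rewrite natr_sum; apply: le_trans (ler_sum_nat stubj) _.
rewrite sumr_const_nat subSS subn0 -mulr_natl.
apply: le_trans (_ : M%:R * \sum_(0 <= n < Tw) gap_count M n w <= _).
  by rewrite ler_wpM2r ?ler_nat // sumr_ge0 // => n _; exact: gap_count_ge0.
by rewrite mulr_sumr; apply: ler_sum_nat => n _; rewrite /dominator lerDl indicE.
Qed.

Lemma dominatorE M n : (fun w => (dominator M n w)%:E) = (fun w =>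
  \sum_(k < 2 * nblocks M) (M%:R * \1_(gap_event M (n %/ nblocks M) k) w)%:E
  + (1 * \1_[set w | (M < D 0 w)%N] w)%:E)%E.
Proof.
by apply/funext => w; rewrite sumEFin -EFinD mul1r /dominator /gap_count mulr_sumr.
Qed.

Lemma measurable_dominator M n : measurable_fun setT (fun w => (dominator M n w)%:E).
Proof.
rewrite dominatorE; apply: emeasurable_funD.
  by apply: emeasurable_sum => k; exact/measurable_fun_scale_indic/measurable_gap_event.
exact/measurable_fun_scale_indic/(measurable_deg_pred 0 (fun x => M < x)%N).
Qed.

Lemma integral_dominator M n : P [set w | (M < D 0 w)%N] = 0%E ->
  (\int[P]_w (dominator M n w)%:E
   = (M%:R * (2 * nblocks M)%:R * (1 - deg_law (leq M)) ^+ (n %/ nblocks M))%:E)%E.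
Proof.
move=> no_big; have mbig := measurable_deg_pred 0 (fun x => M < x)%N.
rewrite dominatorE ge0_integralD //; last 3 first.
- by move=> w _; rewrite sume_ge0 // => k _; rewrite lee_fin mulr_ge0 ?indicE.
- by apply: emeasurable_sum => k; exact/measurable_fun_scale_indic/measurable_gap_event.
- exact: measurable_fun_scale_indic.
rewrite ge0_integral_sum //; last first.
  by move=> k; exact/measurable_fun_scale_indic/measurable_gap_event.
rewrite integral_scale_indic // [X in (_ + X)%E](_ : _ = 0%E) ?adde0; last first.
  by rewrite mul1e; exact: no_big.
rewrite (eq_bigr (fun=> (M%:R * (1 - deg_law (leq M)) ^+ (n %/ nblocks M))%:E)).
  by rewrite sumEFin sumr_const card_ord -[_ *+ (2 * _)]mulr_natr mulrAC.
move=> k _; rewrite integral_scale_indic ?EFinM //; last exact: measurable_gap_event.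
by congr (_ * _)%E; exact: P_gap_event.
Qed.

Lemma integral_CT_T_finite M : 0 < deg_law (leq M) -> P [set w | (M < D 0 w)%N] = 0%E ->
  (\int[P]_w (CT_T R (fun i => D i w) (fun j => c j w))%:E < +oo)%E.
Proof.
move=> p0 no_big; set q := 1 - deg_law (leq M).
have q0 : 0 <= q by rewrite subr_ge0 deg_law_le1.
have q1 : q < 1 by rewrite ltrBlDl ltrDr.
apply: le_lt_trans (_ : _ <= \int[P]_w (\sum_(n <oo) (dominator M n w)%:E))%E _.
  apply: ge0_le_integralT => w; first by rewrite lee_fin /CT_T ler0n.
  have [N TN] := CT_T_le_dominator M w.
  apply: le_trans (_ : (\sum_(0 <= n < N) dominator M n w)%:E <= _)%E; first by rewrite lee_fin.
  by rewrite -sumEFin; apply: nneseries_lim_ge => n _ _; rewrite lee_fin dominator_ge0.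
rewrite integral_nneseries //; last 2 first.
- exact: measurable_dominator.
- by move=> n w _; rewrite lee_fin dominator_ge0.
under eq_eseriesr do rewrite integral_dominator //.
have [m0|m_gt0] := posnP (nblocks M).
  by rewrite eseries0 ?ltry // => n _ _; rewrite m0 mulr0 mul0r.
apply: le_lt_trans (ltry ((M%:R * (2 * nblocks M)%:R) * ((nblocks M)%:R * (1 - q)^-1)))%E.
apply: lime_le; first by apply: is_cvg_nneseries => n _ _; rewrite lee_fin mulr_ge0 ?exprn_ge0.
apply: nearW => N; rewrite sumEFin lee_fin -mulr_sumr ler_wpM2l //.
exact: geometric_sum_divn_le.
Qed.

Definition isolated j L :=
  [set w | (j <= D 0 w)%N] `&` gap (leq j) (blockR 0 L ++ blockL 0 L).

Lemma measurable_isolated j L : measurable (isolated j L).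
Proof.
apply: measurableI; last exact: measurable_gap.
exact: (measurable_deg_pred 0 (leq j)).
Qed.

Lemma P_isolated j L :
  P (isolated j L) = (deg_law (leq j) * (1 - deg_law (leq j)) ^+ (L + L))%:E.
Proof.
set J := blockR 0 L ++ blockL 0 L.
have uJ : uniq (0 :: J).
  rewrite /= mem_cat cat_uniq blockR_uniq blockL_uniq /= andbT; apply/andP; split.
    by apply/negP => /orP[] /mapP [t _]; lia.
  by apply/hasPn => x /mapP [t _ ->]; apply/negP => /mapP [t' _]; lia.
pose s (k : int) : pred nat := if k == 0 then leq j else predC (leq j).
have sJ k : k \in J -> s k = predC (leq j).
  by move: uJ => /= /andP[J0 _] kJ; rewrite /s ifN //; apply: contraNneq J0 => <-.
have allJ w : all (fun k => s k (D k w)) J = all (fun k => ~~ (j <= D k w)%N) J.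
  by apply: eq_in_all => k /sJ ->.
have -> : isolated j L = [set w | all (fun k => s k (D k w)) (0 :: J)].
  apply/seteqP; split => w /=; rewrite allJ /s eqxx; first by case=> -> ->.
  by case/andP.
rewrite P_all_deg // big_cons {1}/s eqxx P_deg_predE.
rewrite (eq_big_seq (fun k => P [set w | predC (leq j) (D k w)])) => [|k kJ]; last by rewrite sJ.
by rewrite prod_P_deg_pred deg_law_predC size_cat !size_map !size_iota -EFinM.
Qed.

Definition gaps j b := \big[setU/set0]_(k < 2 * nblocks j) gap_event j b k.

Lemma measurable_gaps j b : measurable (gaps j b).
Proof. by apply: bigsetU_measurable => k _; exact: measurable_gap_event. Qed.

Lemma P_gaps j b : (P (gaps j b) <= ((1 - deg_law (leq j)) ^+ b *+ (2 * nblocks j))%:E)%E.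
Proof.
apply: le_trans
  (@content_subadditive _ _ _ P (gaps j b) (gap_event j b) (2 * nblocks j) _ _ _) _.
- by move=> k _; exact: measurable_gap_event.
- exact: measurable_gaps.
- by [].
rewrite (eq_bigr (fun=> ((1 - deg_law (leq j)) ^+ b)%:E)) => [|k _]; last exact: P_gap_event.
by rewrite sumEFin sumr_const card_ord.
Qed.

Lemma gamma_cnt_gapR w j L : gap (leq j) (blockR 0 L) w ->
  gamma_cnt (fun k => D k w) j 1 L = 0%N.
Proof.
rewrite /gap /blockR /= all_map => /allP gapL; rewrite /gamma_cnt big1_seq // => k.
rewrite mem_index_iota => /andP[_ kL]; apply/eqP; rewrite eqb0.
by have := gapL k; rewrite mem_iota /= mul0n add0n; apply.
Qed.

Lemma gamma_cnt_gapL w j L : gap (leq j) (blockL 0 L) w ->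
  gamma_cnt (fun k => D k w) j (0 - L%:Z) L = 0%N.
Proof.
rewrite /gap /blockL /= all_map => /allP gapL; rewrite gamma_cnt_left big1_seq // => k.
rewrite mem_index_iota => /andP[_ kL]; apply/eqP; rewrite eqb0 sub0r.
by have := gapL k; rewrite mem_iota /= mul0n add0n; apply.
Qed.

Lemma no_gaps_cntR w j b : (0 < j)%N -> ~ gaps j b w ->
  (nblocks j <= gamma_cnt (fun k => D k w) j 1 (nblocks j * b))%N.
Proof.
move=> j0 nogap; have m0 : (0 < nblocks j)%N by rewrite /nblocks; lia.
rewrite leqNgt; apply/negP => few; have [i im gap_i] := @exists_gapR w (leq j) _ _ m0 few.
apply: nogap; apply: (@bigsetU_sup _ i); first lia.
by rewrite /gap_event /side_block im; rewrite mulKn in gap_i.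
Qed.

Lemma no_gaps_cntL w j b : (0 < j)%N -> ~ gaps j b w ->
  (nblocks j <= gamma_cnt (fun k => D k w) j (0 - (nblocks j * b)%N%:Z) (nblocks j * b))%N.
Proof.
move=> j0 nogap; have m0 : (0 < nblocks j)%N by rewrite /nblocks; lia.
rewrite gamma_cnt_left; under eq_bigr do rewrite sub0r.
rewrite leqNgt; apply/negP => few; have [i im gap_i] := @exists_gapL w (leq j) _ _ m0 few.
apply: nogap; apply: (@bigsetU_sup _ (nblocks j + i)); first lia.
by rewrite /gap_event /side_block ltnNge leq_addr /= addKn; rewrite mulKn in gap_i.
Qed.

Lemma isolated_long_stub w (cc : nat -> bool) j L b : (0 < j)%N ->
  isolated j L w -> ~ gaps j b w ->
  (j <= D 0 w)%N /\ (L < odflt 0%N (stub_len (fun k => D k w) cc j 0))%N.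
Proof.
move=> j0 [jD]; rewrite /gap /= all_cat => /andP[gapR gapL] nogap; split => //.
have [x dx _] : exists2 x, dist_right (fun k => D k w) j 0 = Some x & (x <= nblocks j * b)%N.
  by apply: dist_right_le; rewrite add0r; exact: no_gaps_cntR.
have [y dy _] : exists2 y, dist_left (fun k => D k w) j 0 = Some y & (y <= nblocks j * b)%N.
  by apply: dist_left_le; exact: no_gaps_cntL.
have Lx : (L < x)%N.
  rewrite ltnNge; apply/negP => xL.
  have := leq_gamma_cnt (fun k => D k w) j 1 xL.
  rewrite (gamma_cnt_gapR gapR) -[1]add0r (gamma_cnt_dist_right dx); lia.
have Ly : (L < y)%N.
  rewrite ltnNge; apply/negP => yL.
  have : (gamma_cnt (fun k => D k w) j (0 - y%:Z) y
          <= gamma_cnt (fun k => D k w) j (0 - L%:Z) L)%N.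
    by rewrite !gamma_cnt_left; exact: leq_sum_prefix.
  rewrite (gamma_cnt_gapL gapL) (gamma_cnt_dist_left dy); lia.
by rewrite /stub_len; case: ifP => _; rewrite ?dx ?dy.
Qed.

Definition stub_scale j := Num.truncn ((4 * deg_law (leq j))^-1).
Definition gap_scale j := (Num.truncn (8 * (nblocks j)%:R / deg_law (leq j) ^+ 2)).+1.
(* Excluding the gaps guarantees that the partners of the level-j stub exist;
   otherwise stub_len would default to 0. *)
Definition long_stub j := isolated j (stub_scale j) `\` gaps j (gap_scale j).

Lemma measurable_long_stub j : measurable (long_stub j).
Proof. by apply: measurableD; [exact: measurable_isolated | exact: measurable_gaps]. Qed.

Lemma long_stub_mass j : (0 < j)%N -> 0 < deg_law (leq j) <= 8^-1 ->
  1 / 32 <= (stub_scale j)%:R * fine (P (long_stub j)).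
Proof.
move=> j0; set p := deg_law (leq j); case/andP => p0 p8.
set L := stub_scale j; set b := gap_scale j; set m := nblocks j.
have mI := measurable_isolated j L; have mG := measurable_gaps j b.
have mIG : measurable (isolated j L `&` gaps j b) by exact: measurableI.
set g := fine (P (long_stub j)); set h := fine (P (isolated j L `&` gaps j b)).
have g0 : 0 <= g by rewrite fine_ge0 ?measure_ge0.
have iso_split : p * (1 - p) ^+ (L + L) = g + h.
  apply/EFin_inj; rewrite EFinD !fineK ?fin_num_measure //; last exact: measurable_long_stub.
  by rewrite -P_isolated; exact: measureDI.
have h_small : h <= (1 - p) ^+ b * (2 * m)%:R.
  rewrite -lee_fin fineK ?fin_num_measure // mulr_natr.
  by apply: le_trans (P_gaps j b); apply: le_measure; rewrite ?inE // => w [].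
have /andP[Lp_lo Lp_hi] : (L%:R <= (4 * p)^-1 < L.+1%:R).
  by apply: truncn_itv; rewrite invr_ge0 mulr_ge0 // ltW.
have Lp : 8^-1 <= L%:R * p <= 4^-1.
  have e : (4 * p)^-1 * p = 4^-1 by field; rewrite gt_eqF.
  apply/andP; split; last by rewrite -e ler_wpM2r // ltW.
  have : 4^-1 < L.+1%:R * p by rewrite -e ltr_pM2r.
  by rewrite -[L.+1%:R]natr1 mulrDl mul1r; lra.
have iso_mass : 9 / 16 <= (1 - p) ^+ (L + L).
  by apply: one_sub_pow_ge; [rewrite ltW //=; lra | case/andP: Lp].
have gaps_mass : 8 * m%:R * (1 - p) ^+ b <= p.
  apply: one_sub_pow_small; first by rewrite p0 /=; lra.
  rewrite -ltr_pdivrMr ?exprn_gt0 //; exact: truncnS_gt.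
have : 4^-1 * p <= g by move: h_small; rewrite natrM; nra.
case/andP: Lp; nra.
Qed.

Lemma long_stub_sum_le_CT_T w N :
  \sum_(1 <= j < N) (stub_scale j)%:R * \1_(long_stub j) w
  <= CT_T R (fun i => D i w) (fun j => c j w).
Proof.
have h0 j : 0 <= (stub_scale j)%:R * \1_(long_stub j) w :> R by rewrite mulr_ge0 ?indicE.
have weight_le j : (0 < j)%N -> (stub_scale j)%:R * \1_(long_stub j) w
    <= (odflt 0%N (stub_len (fun k => D k w) (fun j => c j w) j 0))%:R.
  move=> j0; rewrite indicE; case: (boolP (w \in long_stub j)); last by rewrite mulr0.
  move=> /set_mem [iso nogap]; rewrite mulr1 ler_nat ltnW //.
  by case: (isolated_long_stub (fun j => c j w) j0 iso nogap).
have weight0 j : (D 0 w < j)%N -> (stub_scale j)%:R * \1_(long_stub j) w = 0.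
  move=> Dj; rewrite indicE; case: (boolP (w \in long_stub j)); last by rewrite mulr0.
  move=> /set_mem [iso nogap].
  have [jD _] := isolated_long_stub (fun j => c j w) (leq_ltn_trans (leq0n _) Dj) iso nogap.
  by move: (leq_trans Dj jD); rewrite ltnn.
case: N => [|N]; first by rewrite big_geq // /CT_T ler0n.
apply: le_trans (ler_sum_prefix h0 (isT : 1 <= N.+1)%N (leq_maxl N.+1 (D 0 w).+1)) _.
rewrite (@big_cat_nat _ _ _ (D 0 w).+1) ?leq_maxr //= [X in _ + X]big1_seq; last first.
  by move=> j; rewrite mem_index_iota => /andP[_ /andP[Dj _]]; exact: weight0.
by rewrite addr0 /CT_T natr_sum; apply: ler_sum_nat => j /andP[j0 _]; exact: weight_le.
Qed.

Lemma long_stub_sum_le_integral N :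
  (\sum_(1 <= j < N) ((stub_scale j)%:R * fine (P (long_stub j)))%:E
   <= \int[P]_w (CT_T R (fun i => D i w) (fun j => c j w))%:E)%E.
Proof.
have -> : (\sum_(1 <= j < N) ((stub_scale j)%:R * fine (P (long_stub j)))%:E
    = \int[P]_w (\sum_(1 <= j < N) ((stub_scale j)%:R * \1_(long_stub j) w)%:E))%E.
  rewrite ge0_integral_sum //; last first.
    by move=> j; exact/measurable_fun_scale_indic/measurable_long_stub.
  apply: eq_bigr => j _; rewrite integral_scale_indic ?EFinM ?fineK //.
  - by rewrite fin_num_measure //; exact: measurable_long_stub.
  - exact: measurable_long_stub.
apply: ge0_le_integralT => w; first by rewrite sume_ge0 // => j _; rewrite lee_fin mulr_ge0 ?indicE.
by rewrite sumEFin lee_fin; exact: long_stub_sum_le_CT_T.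
Qed.

Lemma deg_law_geq_gt0 : ~ bounded_support F -> forall j, 0 < deg_law (leq j).
Proof.
move=> unbounded j; rewrite lt_def deg_law_ge0 andbT; apply: contra_notN unbounded.
move=> /eqP p0; exists j => n jn; apply/eqP; rewrite eq_le -deg_law_pred1 deg_law_ge0 andbT -p0.
by apply: le_deg_law => x /eqP ->; exact: ltnW.
Qed.

Lemma exists_deg_law_geq_le : (\sum_(n <oo) (F n)%:E = 1)%E ->
  exists2 j, (0 < j)%N & deg_law (leq j) <= 8^-1.
Proof.
move=> F1; have [n Fn] : exists n, 7 / 8 <= \sum_(k < n) F k.
  have [//|small] := pselect (exists n, 7 / 8 <= \sum_(k < n) F k).
  suff : (\sum_(n <oo) (F n)%:E <= (7 / 8)%:E)%E by rewrite F1 lee_fin; lra.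
  apply: lime_le; first by apply: is_cvg_nneseries => n _ _; rewrite lee_fin -deg_law_pred1 deg_law_ge0.
  apply: nearW => N; rewrite sumEFin lee_fin big_mkord leNgt; apply/negP => big.
  by apply: small; exists N; exact: ltW.
exists n.+1 => //; rewrite deg_law_geq big_ord_recr /= -deg_law_pred1.
by have := deg_law_ge0 (pred1 n); lra.
Qed.

Lemma integral_CT_T_unbounded : (\sum_(n <oo) (F n)%:E = 1)%E -> ~ bounded_support F ->
  ~ (\int[P]_w (CT_T R (fun i => D i w) (fun j => c j w))%:E < +oo)%E.
Proof.
move=> F1 unbounded; have [j0 j00 small] := exists_deg_law_geq_le F1.
set I := (\int[P]_w _)%E => Ifin.
have I0 : (0 <= I)%E by apply: integral_ge0 => w _; rewrite lee_fin ler0n.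
have I_fine : I = (fine I)%:E by rewrite fineK // ge0_fin_numE.
pose N := (j0 + 32 * (Num.truncn (fine I)).+1)%N.
have := long_stub_sum_le_integral N; rewrite -/I I_fine sumEFin lee_fin => sum_le_I.
have : (N - j0)%:R / 32 <= \sum_(1 <= j < N) (stub_scale j)%:R * fine (P (long_stub j)).
  rewrite (@big_cat_nat _ _ _ j0) //=; last by rewrite /N leq_addr.
  rewrite -[X in X <= _]add0r; apply: lerD.
    by apply: sumr_ge0 => j _; rewrite mulr_ge0 // fine_ge0 // measure_ge0.
  apply: le_trans (_ : \sum_(j0 <= j < N) (1 / 32 : R) <= _).
    by rewrite sumr_const_nat -[_ *+ (N - j0)]mulr_natr; lra.
  apply: ler_sum_nat => j /andP[j0j _]; apply: long_stub_mass; first exact: leq_trans j0j.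
  rewrite deg_law_geq_gt0 //=; apply: le_trans small.
  by apply: le_deg_law => x; exact: leq_trans.
have -> : (N - j0)%:R / 32 = (Num.truncn (fine I)).+1%:R :> R.
  by rewrite /N addKn natrM; field.
by have := truncnS_gt (fine I); lra.
Qed.

Lemma integral_CT_T_bounded : (\sum_(n <oo) (F n)%:E = 1)%E -> bounded_support F ->
  (\int[P]_w (CT_T R (fun i => D i w) (fun j => c j w))%:E < +oo)%E.
Proof.
move=> F1 [K FK]; have F0 n : 0 <= F n by rewrite -deg_law_pred1 deg_law_ge0.
have [n Fn] : exists n, 0 < F n.
  have [//|zero] := pselect (exists n, 0 < F n).
  move: F1; rewrite eseries0 => [/(congr1 fine) /=|i _ _]; first lra.
  congr (_%:E); apply/eqP; rewrite eq_le F0 andbT leNgt.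
  by apply/negP => Fi; apply: zero; exists i.
have ub m : 0 < F m -> (m <= K)%N.
  by move=> Fm; rewrite leqNgt; apply/negP => /FK Fm0; rewrite Fm0 ltxx in Fm.
have [M FM Mmax] := ex_maxnP (ex_intro _ n Fn) ub.
apply: (@integral_CT_T_finite M).
  by apply: lt_le_trans FM _; rewrite -deg_law_pred1; apply: le_deg_law => x /eqP ->.
rewrite (P_deg_pred 0 (fun x => M < x)%N) eseries0 // => m _ /set_mem /= Mm.
congr (_%:E); apply/eqP; rewrite eq_le F0 andbT leNgt; apply/negP => /Mmax; lia.
Qed.

End CoinTossModel.

Theorem corollary2p2 (R : realType) (d : measure_display)
  (Omega : measurableType d) (P : probability Omega R) (F : nat -> R)
  (D : int -> Omega -> nat) (c : nat -> Omega -> bool) :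
  (forall n, 0 <= F n) ->
  (\sum_(n <oo) (F n)%:E = 1)%E ->
  CT_model P F D c ->
  ((\int[P]_w (CT_T R (fun i => D i w) (fun j => c j w))%:E < +oo)%E
   <-> bounded_support F).
Proof.
move=> _ F1 CT; split; last exact: integral_CT_T_bounded.
move=> finite; have [//|unbounded] := pselect (bounded_support F).
by case: (integral_CT_T_unbounded CT F1 unbounded).
Qed.
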